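(* Let $\delta\in(0,1]$ and let $\mathbf y_1,\ldots,\mathbf y_r\in\mathbb{R}^d$ be $r\le d$ unit-norm vectors such that for every $i\le r$, $\|P_{\mathrm{Span}(\mathbf y_j,\,j<i)^\perp}(\mathbf y_i)\|\ge\delta$. Let $\mathbf Y=[\mathbf y_1,\ldots,\mathbf y_r]$ and $s\ge2$. Then there exist $\lceil r/s\rceil$ orthonormal vectors $\mathbf Z=[\mathbf z_1,\ldots,\mathbf z_{\lceil r/s\rceil}]$ such that for every $\mathbf a\in\mathbb{R}^d$, $$\|\mathbf Z^\top\mathbf a\|_\infty\le\left(\frac{\sqrt d}{\delta}\right)^{s/(s-1)}\|\mathbf Y^\top\mathbf a\|_\infty.$$
   Context: For a linear subspace $E\subseteq\mathbb{R}^d$, $P_E$ denotes the orthogonal projection onto $E$; $\mathrm{Span}(\emptyset)=\{0\}$. *)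

From HB Require Import structures.
From mathcomp Require Import all_boot all_order all_algebra.
From mathcomp Require Import reals exp.
Set Implicit Arguments. Unset Strict Implicit. Unset Printing Implicit Defensive.
Import Order.TTheory GRing.Theory Num.Theory.
Local Open Scope ring_scope.

Section Defs.
Variable R : realType.

Definition norm2 d (v : 'rV[R]_d) : R := Num.sqrt (\sum_(j < d) v 0 j ^+ 2).

Definition linf d (v : 'rV[R]_d) : R := \big[Num.max/0]_(j < d) `|v 0 j|.

(* Orthogonal projection onto the row space E of a matrix A (a subspace of R^d):
   with B = row_base A a basis of E (as rows), P_E v = v B^T (B B^T)^{-1} B.
   For E = {0} (B has no rows) this is 0. *)
Definition orth_proj m d (A : 'M[R]_(m, d)) (v : 'rV[R]_d) : 'rV[R]_d :=
  let B := row_base A in v *m B^T *m invmx (B *m B^T) *m B.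

Definition orth_compl m d (A : 'M[R]_(m, d)) : 'M[R]_d := kermx A^T.

Definition span_before r d (Y : 'M[R]_(r, d)) (i : nat) : 'M[R]_(r, d) :=
  \matrix_(j < r) (if (j < i)%N then row j Y else 0).

End Defs.

Definition ceil_div (r s : nat) : nat := (r + s.-1) %/ s.

From HB Require Import structures.
From mathcomp Require Import all_boot all_order all_algebra.
From mathcomp Require Import reals exp.
From mathcomp Require Import complex spectral.
From mathcomp Require Import ring zify.
Set Implicit Arguments. Unset Strict Implicit. Unset Printing Implicit Defensive.
Import Order.TTheory GRing.Theory Num.Theory.
Local Open Scope ring_scope.

(* Let G = Y Y^T and diagonalize it orthogonally, O G O^T = diag(l). The
   eigenvalues l_i are nonnegative and sum to tr G = r, and by Gram-Schmidt
   det G = prod_i |P_{Span(y_j, j<i)^perp} y_i|^2 >= delta^(2r).  Put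
   K = (sqrt d / delta)^(s/(s-1)) and theta = r / K^2.  If fewer than
   m = ceil(r/s) eigenvalues were >= theta, then det G < r^(m-1) theta^(r-m+1),
   which is <= delta^(2r) because (m-1) s <= r.  For m eigenvalues l_k >= theta
   the vectors z_k = l_k^(-1/2) O_k Y are orthonormal, and by Cauchy-Schwarz
   |z_k . a| = l_k^(-1/2) |sum_i O_ki (y_i . a)| <= sqrt (r / l_k) |Y^T a|_oo
   <= K |Y^T a|_oo. *)

Section RealRows.
Variable R : realFieldType.

Lemma mulmx_trmx_diag m n (A : 'M[R]_(m, n)) i :
  (A *m A^T) i i = \sum_j A i j ^+ 2.
Proof. by rewrite mxE; apply: eq_bigr => j _; rewrite mxE expr2. Qed.

Lemma mulmx_trmx_diag_ge0 m n (A : 'M[R]_(m, n)) i : 0 <= (A *m A^T) i i.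
Proof. by rewrite mulmx_trmx_diag sumr_ge0 // => j _; apply: sqr_ge0. Qed.

Lemma mulmx_trmx00_eq0 n (v : 'rV[R]_n) : (v *m v^T) 0 0 = 0 -> v = 0.
Proof.
rewrite mulmx_trmx_diag => v0; apply/rowP => j; rewrite mxE.
have /eqP := psumr_eq0P (fun i _ => sqr_ge0 (v 0 i)) v0 (i := j) isT.
by rewrite sqrf_eq0 => /eqP.
Qed.

Lemma gram_unitmx k d (B : 'M[R]_(k, d)) : row_free B -> B *m B^T \in unitmx.
Proof.
move=> freeB; rewrite -row_free_unit; apply/inj_row_free => x xBB0.
have : ((x *m B) *m (x *m B)^T) 0 0 = 0.
  by rewrite trmx_mul !mulmxA -[x *m B *m B^T]mulmxA xBB0 !mul0mx mxE.
by move/mulmx_trmx00_eq0/eqP; rewrite mulmx_free_eq0 // => /eqP.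
Qed.

Lemma orthomx_row0_completion n (u : 'rV[R]_n.+1) : u *m u^T = 1%:M ->
  exists H : 'M_n.+1, H *m H^T = 1%:M /\ row 0 H = u.
Proof.
move=> uu.
set e : 'rV[R]_n.+1 := delta_mx 0 0.
have [->|ne] := eqVneq u e; first by exists 1%:M; rewrite trmx1 mulmx1 row1.
have ee : e *m e^T = 1%:M.
  by rewrite trmx_delta mul_delta_mx; apply/matrixP => i j; rewrite !ord1 !mxE.
set t := (e *m u^T) 0 0.
have eu : e *m u^T = t%:M by rewrite [LHS]mx11_scalar.
have ue : u *m e^T = t%:M by rewrite -[LHS]trmxK trmx_mul trmxK eu tr_scalar_mx.
set w := e - u.
have ww : w *m w^T = (2 - 2 * t)%:M.
  rewrite /w linearB /= mulmxBl !mulmxBr ee eu ue uu.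
  by apply/matrixP => i j; rewrite !ord1 !mxE eqxx /=; ring.
set c := 2 - 2 * t in ww.
have c0 : c != 0.
  apply: contra ne => /eqP c0; apply/eqP/esym/subr0_eq.
  by apply/mulmx_trmx00_eq0; rewrite -/w ww c0 mxE.
(* the Householder reflection exchanging e and u *)
exists (1%:M - (2 / c) *: (w^T *m w)).
have wTw : (w^T *m w) *m (w^T *m w) = c *: (w^T *m w).
  by rewrite mulmxA -[w^T *m w *m w^T]mulmxA ww mul_mx_scalar -scalemxAl.
have ew : e *m w^T = (1 - t)%:M.
  by rewrite /w linearB /= mulmxBr ee eu raddfB.
have symH : (1%:M - (2 / c) *: (w^T *m w))^T = 1%:M - (2 / c) *: (w^T *m w).
  by rewrite linearB /= linearZ /= trmx_mul trmxK trmx1.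
split.
  rewrite symH; move: wTw; set X := w^T *m w; clearbody X => wTw.
  rewrite mulmxBl !mulmxBr mul1mx mulmx1 -!scalemxAl -!scalemxAr wTw mul1mx.
  rewrite !scalerA -scalerBl -scaleNr -addrA -scalerBl.
  have -> : - (2 / c) - (2 / c - 2 / c * (2 / c) * c) = 0 by field.
  by rewrite scale0r addr0.
rewrite rowE mulmxBr mulmx1 -scalemxAr mulmxA -/e ew mul_scalar_mx scalerA.
have -> : 2 / c * (1 - t) = 1 by rewrite /c; field; rewrite -/c.
by rewrite scale1r /w opprB addrC subrK.
Qed.

End RealRows.

Section SymmetricBlock.
Variable R : pzRingType.

Lemma symmetric_mx_row0_block n (B : 'M[R]_n.+1) a :
  B^T = B -> row 0 B = a *: delta_mx 0 0 ->
  (B : 'M_(1 + n)) = block_mx a%:M 0 0 (drsubmx (B : 'M_(1 + n))).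
Proof.
move=> symB rowB.
have B0 j : B 0 j = a * (j == 0)%:R.
  by have := congr1 (fun M : 'rV_n.+1 => M 0 j) rowB; rewrite !mxE /= eq_sym.
have lshift0 i : lshift n i = 0 :> 'I_(1 + n) by apply/val_inj; rewrite /= ord1.
rewrite -[LHS](@submxK _ 1 n 1 n); congr block_mx; apply/matrixP => i j.
- by rewrite !mxE lshift0 [lshift n j]lshift0 ord1 [j]ord1 B0 eqxx mulr1.
- by rewrite !mxE lshift0 B0; case: eqP => [/(congr1 val)|] //=; rewrite mulr0.
- rewrite !mxE lshift0 -symB mxE B0.
  by case: eqP => [/(congr1 val)|] //=; rewrite mulr0.
Qed.

End SymmetricBlock.

Section SymmetricSpectral.
Variable R : rcfType.

(* Over R[i] the matrix is hermitian, so the complex spectral theorem gives it a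
   real eigenvalue, i.e. a real root of its characteristic polynomial. *)
Lemma symmetric_mx_eigenvalue n (A : 'M[R]_n.+1) : A^T = A ->
  exists a, eigenvalue A a.
Proof.
move=> symA; pose Ac := map_mx (real_complex R) A.
have Ac_sym : Ac \is symmetricmx.
  apply/is_hermitianmxP; rewrite expr0 scale1r.
  by apply/matrixP => i j; rewrite !mxE -{1}symA mxE.
have Ac_real : Ac \is a mxOver Num.real.
  apply/mxOverP => i j; rewrite mxE.
  by rewrite realE ler0c lecE /= eqxx /= -realE num_real.
have Ac_herm := realsym_hermsym Ac_sym Ac_real.
have /orthomx_spectralP Ac_eq := hermitian_normalmx Ac_herm.
have D_real := hermitian_spectral_diag_real Ac_herm.
set P := spectralmx Ac in Ac_eq; set D := spectral_diag Ac in Ac_eq D_real.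
have P_unit : P \in unitmx by apply: spectral_unit.
have ev : eigenvalue Ac (D 0 0).
  apply/eigenvalueP; exists (delta_mx 0 0 *m P).
    rewrite Ac_eq !mulmxA mulmxK // scalemxAl; congr (_ *m P).
    rewrite mul_mx_diag; apply/matrixP => i j; rewrite !mxE ord1 eqxx /=.
    by case: eqP => [->|_]; [rewrite mulrC | rewrite mul0r mulr0].
  rewrite mulmx_free_eq0 ?row_free_unit //.
  by apply/eqP => /matrixP /(_ 0 0) /eqP; rewrite !mxE !eqxx oner_eq0.
have : D 0 0 \is Num.real by apply: (mxOverP D_real).
rewrite realE !lecE /= => Im0.
have D00 : D 0 0 = real_complex R (complex.Re (D 0 0)).
  apply/eqP; rewrite eq_complex /= eqxx /=.
  by case/orP: Im0 => /andP[/eqP -> _].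
exists (complex.Re (D 0 0)).
by move: ev; rewrite D00 !eigenvalue_root_char -map_char_poly fmorph_root.
Qed.

Lemma symmetric_mx_unit_eigenvector n (A : 'M[R]_n.+1) : A^T = A ->
  exists a (u : 'rV_n.+1), u *m u^T = 1%:M /\ u *m A = a *: u.
Proof.
move=> /symmetric_mx_eigenvalue [a /eigenvalueP [v vA v_neq0]].
have vv_gt0 : 0 < (v *m v^T) 0 0.
  rewrite lt0r mulmx_trmx_diag_ge0 andbT.
  by apply: contra v_neq0 => /eqP /mulmx_trmx00_eq0 ->.
set vv := (v *m v^T) 0 0 in vv_gt0 *.
exists a, ((Num.sqrt vv)^-1 *: v); split.
  rewrite linearZ /= -scalemxAl -scalemxAr [v *m v^T]mx11_scalar -/vv !scalerA.
  by rewrite -expr2 exprVn sqr_sqrtr ?ltW // scale_scalar_mx mulVf ?gt_eqF.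
by rewrite -scalemxAl vA !scalerA mulrC.
Qed.

(* Conjugating by an orthogonal H whose first row is a unit eigenvector splits
   off a 1 x 1 block; recurse on the remaining n x n block. *)
Lemma symmetric_mx_orthodiag n (A : 'M[R]_n) : A^T = A ->
  exists (O : 'M_n) (l : 'rV_n), O *m O^T = 1%:M /\ O *m A *m O^T = diag_mx l.
Proof.
elim: n A => [|n IH] A symA.
  by exists 1%:M, 0; split; [rewrite trmx1 mulmx1 | apply/matrixP => -[]].
have [a [u [uu uA]]] := symmetric_mx_unit_eigenvector symA.
have [H [HH Hu]] := orthomx_row0_completion uu.
pose B := H *m A *m H^T.
have symB : B^T = B by rewrite /B !trmx_mul trmxK symA mulmxA.
have rowB : row 0 B = a *: delta_mx 0 0.
  by rewrite /B !row_mul Hu uA -scalemxAl -Hu -row_mul HH row1.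
have Bblock := symmetric_mx_row0_block symB rowB.
have BE : B = H *m A *m H^T by [].
clearbody B; set B' := drsubmx _ in Bblock.
have symB' : B'^T = B' by rewrite /B' trmx_drsub symB.
have [O' [l' [OO' OBO']]] := IH B' symB'.
exists (block_mx (1%:M : 'M_1) 0 0 O' *m H), (row_mx (a%:M : 'M_1) l').
have blockT : (block_mx (1%:M : 'M_1) 0 0 O')^T = block_mx 1%:M 0 0 O'^T.
  by rewrite tr_block_mx !trmx0 trmx1.
split.
  rewrite trmx_mul mulmxA -[_ *m H *m H^T]mulmxA HH mulmx1 blockT.
  rewrite (@mulmx_block _ 1 n 1 n 1 n) !mulmx0 !mul0mx !mulmx1 !addr0 !add0r.
  by rewrite OO' -scalar_mx_block.
rewrite trmx_mul blockT !mulmxA -[_ *m H *m A]mulmxA.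
rewrite -[_ *m (H *m A) *m H^T]mulmxA -BE Bblock.
rewrite !(@mulmx_block _ 1 n 1 n 1 n) !mulmx0 !mul0mx !mulmx1 !mul1mx.
rewrite !addr0 !add0r OBO' (@diag_mx_row _ n 1).
have -> : diag_mx (a%:M : 'rV_1) = a%:M.
  by apply/matrixP => i j; rewrite !ord1 !mxE.
by rewrite mul0mx.
Qed.

End SymmetricSpectral.

Section OrthogonalConjugation.
Variable R : comPzRingType.
Variables (n : nat) (O A : 'M[R]_n) (l : 'rV[R]_n).
Hypotheses (OO : O *m O^T = 1%:M) (OAO : O *m A *m O^T = diag_mx l).

Lemma orthomx_conj_diag_mxtrace : \tr A = \sum_i l 0 i.
Proof. by rewrite -mxtrace_diag -OAO mxtrace_mulC mulmxA (mulmx1C OO) mul1mx. Qed.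

Lemma orthomx_conj_diag_det : \det A = \prod_i l 0 i.
Proof.
have detO2 : \det O * \det O = 1 by rewrite -{2}(det_tr O) -det_mulmx OO det1.
by rewrite -det_diag -OAO !det_mulmx det_tr mulrAC detO2 mul1r.
Qed.

End OrthogonalConjugation.

Section CauchySchwarz.
Variable R : rcfType.

Lemma sum_abs_le_sqrt n (w : 'I_n -> R) :
  \sum_i w i ^+ 2 = 1 -> \sum_i `|w i| <= Num.sqrt n%:R.
Proof.
case: n w => [|n] w w1; first by rewrite big_ord0 sqrtr_ge0.
set S := \sum_i `|w i|; set t := S / n.+1%:R.
have S_ge0 : 0 <= S by apply: sumr_ge0.
(* t is the mean of the |w i|, and their variance is nonnegative. *)
have var : \sum_i (`|w i| - t) ^+ 2 = 1 - S ^+ 2 / n.+1%:R.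
  transitivity (\sum_i (w i ^+ 2 - (2 * t) * `|w i| + t ^+ 2)).
    by apply: eq_bigr => i _; rewrite -[w i ^+ 2]real_normK ?num_real //; ring.
  rewrite !big_split /= sumrN -mulr_sumr w1 sumr_const card_ord -/S /t.
  by rewrite -mulr_natr; field; rewrite addrC natr1 pnatr_eq0.
have : 0 <= 1 - S ^+ 2 / n.+1%:R.
  by rewrite -var sumr_ge0 // => i _; apply: sqr_ge0.
rewrite subr_ge0 ler_pdivrMr ?ltr0Sn // mul1r => S2.
by rewrite -(ger0_norm S_ge0) -sqrtr_sqr ler_sqrt.
Qed.

End CauchySchwarz.

Section Norms.
Variable R : realType.

Lemma sqr_norm2 d (v : 'rV[R]_d) : norm2 v ^+ 2 = (v *m v^T) 0 0.
Proof.
by rewrite mulmx_trmx_diag sqr_sqrtr // sumr_ge0 // => j _; apply: sqr_ge0.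
Qed.

Lemma linf_ge0 n (v : 'rV[R]_n) : 0 <= linf v.
Proof. by rewrite /linf; elim/big_ind: _ => // x y; rewrite le_max => ->. Qed.

Lemma abs_le_linf n (v : 'rV[R]_n) j : `|v 0 j| <= linf v.
Proof. by rewrite /linf (bigD1 j) //= le_max lexx. Qed.

Lemma linf_le n (v : 'rV[R]_n) b :
  0 <= b -> (forall j, `|v 0 j| <= b) -> linf v <= b.
Proof.
by move=> b_ge0 vb; rewrite /linf; elim/big_ind: _ => // x y; rewrite ge_max => ->.
Qed.

Lemma abs_dot_le_linf n (v : 'rV[R]_n) (w : 'I_n -> R) :
  \sum_i w i ^+ 2 = 1 -> `|\sum_i v 0 i * w i| <= Num.sqrt n%:R * linf v.
Proof.
move=> w1; apply: le_trans (ler_norm_sum _ _ _) _.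
apply: le_trans (_ : \sum_i linf v * `|w i| <= _).
  by apply: ler_sum => i _; rewrite normrM ler_wpM2r ?abs_le_linf.
by rewrite -mulr_sumr mulrC ler_wpM2r ?linf_ge0 ?sum_abs_le_sqrt.
Qed.

End Norms.

Section Projection.
Variable R : realType.
Variables (m d : nat) (F : 'M[R]_(m, d)) (y : 'rV[R]_d).

Lemma orth_proj_compl_orthogonal : orth_proj (orth_compl F) y *m F^T = 0.
Proof.
have BF : row_base (orth_compl F) *m F^T = 0.
  have /submxP [X ->] : (row_base (orth_compl F) <= orth_compl F)%MS.
    by rewrite eq_row_base.
  by rewrite -mulmxA mulmx_ker mulmx0.
by rewrite /orth_proj -mulmxA BF mulmx0.
Qed.

Lemma orth_proj_compl_residual : (y - orth_proj (orth_compl F) y <= F)%MS.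
Proof.
rewrite /orth_proj /orth_compl; set E := kermx F^T; set B := row_base E.
have B_unit : B *m B^T \in unitmx by apply/gram_unitmx/row_base_free.
have EB : (E <= B)%MS by rewrite eq_row_base.
clearbody B.
set z := y - _.
have zB : z *m B^T = 0.
  by rewrite /z mulmxBl -!mulmxA mulmxA mulmxA mulmxKV // subrr.
have zE : (z <= kermx E^T)%MS.
  by apply/sub_kermxP; have /submxP [X ->] := EB; rewrite trmx_mul mulmxA zB mul0mx.
have FE : (F <= kermx E^T)%MS.
  by apply/sub_kermxP; rewrite -[F *m E^T]trmxK trmx_mul trmxK mulmx_ker trmx0.
have rankE : \rank (kermx E^T) = \rank F.
  by rewrite mxrank_ker mxrank_tr mxrank_ker mxrank_tr subKn // rank_leq_col.
have := mxrank_leqif_sup FE; rewrite rankE => /leqif_refl EF.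
exact: submx_trans zE EF.
Qed.

End Projection.

Section GramSchmidt.
Variables (R : realType) (r d : nat) (Y : 'M[R]_(r, d)).

Definition gram_schmidt_row (i : 'I_r) : 'rV[R]_d :=
  orth_proj (orth_compl (span_before Y i)) (row i Y).

Lemma span_before_diag (i : nat) :
  span_before Y i = diag_mx (\row_(j < r) ((j < i)%N)%:R) *m Y.
Proof.
rewrite mul_diag_mx; apply/matrixP => j k; rewrite !mxE.
by case: ifP; rewrite ?mxE ?mul1r ?mul0r.
Qed.

Lemma gram_schmidt_unitriangular : exists T : 'M[R]_r,
  [/\ forall j k : 'I_r, (j < k)%N -> T j k = 0,
      forall i, T i i = 1
    & forall i, row i (T *m Y) = gram_schmidt_row i].
Proof.
pose D (i : 'I_r) := diag_mx (\row_(j < r) ((j < i)%N)%:R) : 'M[R]_r.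
pose c i := (row i Y - gram_schmidt_row i) *m pinvmx (span_before Y i) *m D i.
have c_ge : forall i j : 'I_r, (i <= j)%N -> c i 0 j = 0.
  by move=> i j ij; rewrite /c mul_mx_diag !mxE ltnNge ij mulr0.
exists (\matrix_(i, j) ((i == j)%:R - c i 0 j)); split.
- move=> j k jk; rewrite mxE c_ge ?subr0; last exact: ltnW.
  by case: eqP => // ejk; move: jk; rewrite ejk ltnn.
- by move=> i; rewrite mxE eqxx c_ge // subr0.
move=> i; have rowT :
    row i (\matrix_(i, j) ((i == j)%:R - c i 0 j)) = delta_mx 0 i - c i.
  by apply/rowP => j; rewrite !mxE eqxx /= eq_sym.
rewrite row_mul rowT mulmxBl -rowE.
have -> : c i *m Y = row i Y - gram_schmidt_row i.
  by rewrite /c -mulmxA -span_before_diag mulmxKpV ?orth_proj_compl_residual.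
by rewrite opprB addrC subrK.
Qed.

Lemma det_gram_schmidt : \det (Y *m Y^T) =
  \prod_i (gram_schmidt_row i *m (gram_schmidt_row i)^T) 0 0.
Proof.
have [T [T_low T1 rowQ]] := gram_schmidt_unitriangular; set Q := T *m Y.
have detT : \det T = 1.
  by rewrite det_trig ?big1 //; apply/is_trig_mxP.
have QY_up (i k : 'I_r) : (k < i)%N -> (Q *m Y^T) i k = 0.
  move=> ki; have := congr1 (fun M : 'rV_r => M 0 k)
    (orth_proj_compl_orthogonal (span_before Y i) (row i Y)).
  rewrite -/(gram_schmidt_row i) -rowQ mxE [RHS]mxE => <-.
  by rewrite mxE; apply: eq_bigr => l _; rewrite !mxE ki mxE.
have QQ_up (i j : 'I_r) : (j < i)%N -> (Q *m Q^T) i j = 0.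
  move=> ji; rewrite {2}/Q trmx_mul mulmxA mxE big1 // => k _.
  have [ki|ik] := ltnP k i; first by rewrite QY_up // mul0r.
  by rewrite [T^T k j]mxE T_low ?mulr0 // (leq_trans ji ik).
have -> : \det (Y *m Y^T) = \det (Q *m Q^T).
  rewrite /Q trmx_mul !mulmxA !det_mulmx -mulmxA det_mulmx det_tr detT.
  by rewrite !mul1r mulr1.
rewrite -det_tr det_trig; last by apply/is_trig_mxP => i j ij; rewrite mxE QQ_up.
by apply: eq_bigr => i _; rewrite -rowQ !mxE; apply: eq_bigr => j _; rewrite !mxE.
Qed.

Lemma gram_det_ge (delta : R) : 0 <= delta ->
  (forall i, delta <= norm2 (gram_schmidt_row i)) ->
  delta ^+ (2 * r) <= \det (Y *m Y^T).
Proof.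
move=> delta_ge0 delta_le.
rewrite det_gram_schmidt exprM -[r in X in X <= _]card_ord.
rewrite -prodr_const; apply: ler_prod => i _; rewrite sqr_ge0 -sqr_norm2.
by rewrite lerXn2r ?nnegrE ?sqrtr_ge0.
Qed.

End GramSchmidt.

Lemma ceil_div_le r s : (0 < s)%N -> (ceil_div r s <= r)%N.
Proof. by move=> s_gt0; rewrite -ltnS ltn_divLR //; nia. Qed.

Lemma ceil_div_pred_mul r s : (0 < s)%N -> ((ceil_div r s).-1 * s <= r)%N.
Proof.
move=> s_gt0; have := leq_divM (r + s.-1) s; rewrite -/(ceil_div r s); nia.
Qed.

Section ThresholdCount.
Variable R : realDomainType.

Lemma card_ge_threshold n k (l : 'I_n -> R) (th M : R) :
  (k < n)%N -> 0 < th <= M -> (forall i, 0 <= l i <= M) ->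
  M ^+ k * th ^+ (n - k) <= \prod_i l i -> (k < #|[set i | (th <= l i)%R]|)%N.
Proof.
move=> kn /andP [th_gt0 thM] l_bnd prod_ge; set S := [set i | th <= l i].
rewrite ltnNge; apply/negP => cardS.
have cardC : #|~: S| = (n - #|S|)%N by rewrite cardsCs setCK card_ord.
have M_gt0 : 0 < M := lt_le_trans th_gt0 thM.
have prodS : \prod_(i in S) l i <= M ^+ #|S|.
  by rewrite -prodr_const; apply: ler_prod => i _; apply: l_bnd.
have prodC : \prod_(i in ~: S) l i < th ^+ #|~: S|.
  rewrite -prodr_const; apply: ltr_prod => [|i]; last first.
    by rewrite !inE -ltNge => ->; rewrite andbT; case/andP: (l_bnd i).
  have /card_gt0P [i0 Ci0] : (0 < #|~: S|)%N.
    by rewrite cardC subn_gt0 (leq_ltn_trans cardS).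
  by apply/hasP; exists i0; rewrite ?mem_index_enum.
have : \prod_i l i < M ^+ k * th ^+ (n - k).
  have -> : \prod_i l i = \prod_(i in S) l i * \prod_(i in ~: S) l i.
    rewrite (bigID (mem S)) /=; congr (_ * _).
    by apply: eq_bigl => i; rewrite in_setC.
  apply: le_lt_trans (_ : _ <= M ^+ #|S| * \prod_(i in ~: S) l i) _.
    by rewrite ler_wpM2r ?prodr_ge0 // => i _; case/andP: (l_bnd i).
  apply: lt_le_trans (_ : _ < M ^+ #|S| * th ^+ #|~: S|) _.
    by rewrite ltr_pM2l ?exprn_gt0.
  have -> : (#|~: S| = (k - #|S|) + (n - k))%N by rewrite cardC; lia.
  have -> : M ^+ k = M ^+ #|S| * M ^+ (k - #|S|) by rewrite -exprD subnKC.
  rewrite exprD mulrA ler_pM2r ?exprn_gt0 // ler_pM2l ?exprn_gt0 //.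
  by apply: lerXn2r; rewrite ?nnegrE ?(ltW th_gt0) ?(ltW M_gt0).
by rewrite ltNge prod_ge.
Qed.

End ThresholdCount.

Lemma card_ge_ord_inj (T : finType) (A : {set T}) m :
  (m <= #|A|)%N -> exists f : 'I_m -> T, injective f /\ forall k, f k \in A.
Proof.
move=> mA; exists (fun k => enum_val (widen_ord mA k)); split => [k k'|k].
  by move=> /enum_val_inj /(congr1 val) /= /val_inj.
exact: enum_valP.
Qed.

Section Exponent.
Variable R : realType.
Variables (r d s m : nat) (delta : R).
Hypotheses (delta_gt0 : 0 < delta) (delta_le1 : delta <= 1) (r_gt0 : (0 < r)%N)
  (rd : (r <= d)%N) (s_ge2 : (2 <= s)%N).

Let base := Num.sqrt d%:R / delta.
Let expo := s%:R / (s%:R - 1) : R.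

Lemma base_ge1 : 1 <= base.
Proof.
have sqrtd_ge1 : 1 <= Num.sqrt d%:R :> R.
  by rewrite -[X in X <= _]sqrtr1 ler_sqrt ?ler0n // ler1n (leq_trans r_gt0).
by rewrite /base ler_pdivlMr // mul1r (le_trans delta_le1).
Qed.

Lemma base_powR_ge1 : 1 <= base `^ expo.
Proof.
rewrite -(powRr0 base) ler_powR ?base_ge1 // divr_ge0 ?ler0n // subr_ge0 ler1n.
exact: leq_trans s_ge2.
Qed.

Hypotheses (m_gt0 : (0 < m)%N) (ms : (m.-1 * s <= r)%N).

Lemma threshold_pow_le :
  r%:R ^+ m.-1 * (r%:R / (base `^ expo) ^+ 2) ^+ (r - m.-1) <= delta ^+ (2 * r).
Proof.
have K_gt0 : 0 < base `^ expo := lt_le_trans ltr01 base_powR_ge1.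
rewrite expr_div_n mulrA -exprD subnKC; last by nia.
rewrite ler_pdivrMr ?exprn_gt0 // -exprM.
have -> : (base `^ expo) ^+ (2 * (r - m.-1)) = base `^ (expo * (2 * (r - m.-1))%:R).
  by rewrite powRrM powR_mulrn ?powR_ge0.
(* (m-1) s <= r is exactly what makes expo * 2(r - m + 1) reach 2r. *)
have exp_le : (2 * r)%:R <= expo * (2 * (r - m.-1))%:R.
  have s1_gt0 : 0 < s%:R - 1 :> R by rewrite subr_gt0 ltr1n.
  rewrite /expo mulrAC ler_pdivlMr // -(@natrB _ s 1) ?(leq_trans _ s_ge2) //.
  by rewrite -!natrM ler_nat; nia.
apply: le_trans (_ : delta ^+ (2 * r) * base `^ (2 * r)%:R <= _); last first.
  by apply: ler_wpM2l; [rewrite exprn_ge0 ?ltW | exact: (ler_powR base_ge1 exp_le)].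
rewrite powR_mulrn ?(le_trans ler01 base_ge1) // -exprMn /base mulrCA.
rewrite divff ?gt_eqF //.
by rewrite mulr1 exprM sqr_sqrtr ?ler0n // lerXn2r ?nnegrE ?ler0n // ler_nat.
Qed.

End Exponent.

Section GramEigen.
Variables (R : realType) (r d : nat) (Y : 'M[R]_(r, d)) (O : 'M[R]_r) (l : 'rV[R]_r).
Hypotheses (OO : O *m O^T = 1%:M) (OGO : O *m (Y *m Y^T) *m O^T = diag_mx l).

Lemma gram_eigenvalueE i : l 0 i = ((O *m Y) *m (O *m Y)^T) i i.
Proof.
have := congr1 (fun M : 'M_r => M i i) OGO.
by rewrite [RHS]mxE eqxx mulr1n trmx_mul !mulmxA => <-.
Qed.

Lemma gram_eigenvalue_ge0 i : 0 <= l 0 i.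
Proof. by rewrite gram_eigenvalueE mulmx_trmx_diag_ge0. Qed.

Lemma gram_eigenvalue_sum : \sum_i l 0 i = \sum_i norm2 (row i Y) ^+ 2.
Proof.
rewrite -(orthomx_conj_diag_mxtrace OO OGO); apply: eq_bigr => i _.
by rewrite sqr_norm2 !mulmx_trmx_diag; apply: eq_bigr => j _; rewrite mxE.
Qed.

Lemma gram_eigenvalue_bound :
  (forall i, norm2 (row i Y) = 1) -> forall i, 0 <= l 0 i <= r%:R.
Proof.
move=> Y_unit i; have l_sum : \sum_i l 0 i = r%:R.
  rewrite gram_eigenvalue_sum (eq_bigr (fun=> 1)) => [|j _].
    by rewrite sumr_const card_ord.
  by rewrite Y_unit expr1n.
rewrite gram_eigenvalue_ge0 -l_sum (bigD1 i) //= lerDl.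
by rewrite sumr_ge0 // => j _; apply: gram_eigenvalue_ge0.
Qed.

Lemma gram_eigenvalue_prod_ge (delta : R) : 0 <= delta ->
  (forall i, delta <= norm2 (gram_schmidt_row Y i)) ->
  delta ^+ (2 * r) <= \prod_i l 0 i.
Proof.
by move=> ? ?; rewrite -(orthomx_conj_diag_det OO OGO); apply: gram_det_ge.
Qed.

Variables (m : nat) (f : 'I_m -> 'I_r).

Definition normalized_eigenrows : 'M[R]_(m, d) :=
  (\matrix_(k < m, i < r) ((Num.sqrt (l 0 (f k)))^-1 * O (f k) i)) *m Y.

Lemma normalized_eigenrows_orthonormal :
  injective f -> (forall k, 0 < l 0 (f k)) ->
  normalized_eigenrows *m normalized_eigenrows^T = 1%:M.
Proof.
move=> f_inj l_gt0; apply/matrixP => k k'.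
set c := fun k => (Num.sqrt (l 0 (f k)))^-1.
rewrite trmx_mul !mulmxA -(mulmxA _ Y).
have -> : (\matrix_(k, i) (c k * O (f k) i) *m (Y *m Y^T) *m
            (\matrix_(k, i) (c k * O (f k) i))^T) k k' =
          c k * c k' * (O *m (Y *m Y^T) *m O^T) (f k) (f k').
  rewrite !mxE mulr_sumr; apply: eq_bigr => j _; rewrite !mxE.
  rewrite (eq_bigr (fun i => c k * (O (f k) i * (Y *m Y^T) i j))); last first.
    by move=> i _; rewrite mxE mulrA.
  by rewrite -mulr_sumr; ring.
rewrite OGO !mxE.
have [<-|kk'] := eqVneq k k'.
  by rewrite !eqxx mulr1n /c -expr2 exprVn sqr_sqrtr ?ltW // mulVf ?gt_eqF.
by rewrite (inj_eq f_inj) (negPf kk') mulr0n mulr0.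
Qed.

Lemma normalized_eigenrows_dot a k :
  `|(a *m normalized_eigenrows^T) 0 k|
    <= (Num.sqrt (l 0 (f k)))^-1 * (Num.sqrt r%:R * linf (a *m Y^T)).
Proof.
have -> : (a *m normalized_eigenrows^T) 0 k =
    (Num.sqrt (l 0 (f k)))^-1 * \sum_i (a *m Y^T) 0 i * O (f k) i.
  rewrite trmx_mul mulmxA mxE mulr_sumr; apply: eq_bigr => i _.
  by rewrite !mxE mulrCA.
rewrite normrM ger0_norm ?invr_ge0 ?sqrtr_ge0 // ler_wpM2l ?invr_ge0 ?sqrtr_ge0 //.
apply: abs_dot_le_linf.
by rewrite -mulmx_trmx_diag OO mxE eqxx.
Qed.

Lemma normalized_eigenrows_linf (K : R) :
  0 < K -> (forall k, 0 < l 0 (f k)) -> (forall k, r%:R / K ^+ 2 <= l 0 (f k)) ->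
  forall a, linf (a *m normalized_eigenrows^T) <= K * linf (a *m Y^T).
Proof.
move=> K_gt0 l_gt0 l_ge a; apply: linf_le => [|k].
  by rewrite mulr_ge0 ?linf_ge0 ?ltW.
apply: le_trans (normalized_eigenrows_dot a k) _.
rewrite mulrA ler_wpM2r ?linf_ge0 // mulrC -sqrtrV ?(ltW (l_gt0 k)) //.
rewrite -sqrtrM ?ler0n // -(ger0_norm (ltW K_gt0)) -sqrtr_sqr.
rewrite ler_sqrt ?sqr_ge0 // ler_pdivrMr // mulrC.
by have := l_ge k; rewrite ler_pdivrMr ?exprn_gt0.
Qed.

End GramEigen.

Unset Implicit Arguments.
Theorem lemma22 (R : realType) (d r s : nat) (delta : R)
    (Y : 'M[R]_(r, d)) :
  0 < delta -> delta <= 1 ->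
  (r <= d)%N ->
  (forall i : 'I_r, norm2 (row i Y) = 1) ->
  (forall i : 'I_r,
      delta <= norm2 (orth_proj (orth_compl (span_before Y i)) (row i Y))) ->
  (2 <= s)%N ->
  exists Z : 'M[R]_(ceil_div r s, d),
    Z *m Z^T = 1%:M /\
    forall a : 'rV[R]_d,
      linf (a *m Z^T) <=
        powR (Num.sqrt d%:R / delta) (s%:R / (s%:R - 1)) * linf (a *m Y^T).
Proof.
move=> delta_gt0 delta_le1 rd Y_unit Y_gs s_ge2.
have s_gt0 : (0 < s)%N by apply: leq_trans s_ge2.
set m := ceil_div r s; set K := powR _ _.
have [m0|m_gt0] := posnP m.
  exists 0; split => [|a].
    by apply/matrixP => i; have := ltn_ord i; rewrite {2}m0.
  apply: linf_le => [|j]; first by rewrite mulr_ge0 ?linf_ge0 ?powR_ge0.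
  by have := ltn_ord j; rewrite {2}m0.
have r_gt0 : (0 < r)%N := leq_trans m_gt0 (ceil_div_le r s_gt0).
have K_ge1 : 1 <= K := base_powR_ge1 delta_gt0 delta_le1 r_gt0 rd s_ge2.
have K_gt0 : 0 < K := lt_le_trans ltr01 K_ge1.
have G_sym : (Y *m Y^T)^T = Y *m Y^T by rewrite trmx_mul trmxK.
have [O [l [OO OGO]]] := symmetric_mx_orthodiag G_sym.
set th := r%:R / K ^+ 2.
have th_gt0 : 0 < th by rewrite divr_gt0 ?exprn_gt0 ?ltr0n.
have th_card : (m <= #|[set i | (th <= l 0 i)%R]|)%N.
  rewrite -(prednK m_gt0); apply: (@card_ge_threshold _ r _ _ th r%:R).
  - by rewrite prednK // ceil_div_le.
  - by rewrite th_gt0 ler_pdivrMr ?exprn_gt0 // ler_peMr ?ler0n // expr_ge1 // (le_trans ler01 K_ge1).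
  - exact: gram_eigenvalue_bound OGO Y_unit.
  apply: le_trans (gram_eigenvalue_prod_ge OO OGO (ltW delta_gt0) Y_gs).
  exact: threshold_pow_le delta_gt0 delta_le1 r_gt0 rd s_ge2 m_gt0
    (ceil_div_pred_mul r s_gt0).
have [f [f_inj f_th]] := card_ge_ord_inj th_card.
have l_ge k : th <= l 0 (f k) by have := f_th k; rewrite inE.
have l_gt0 k : 0 < l 0 (f k) := lt_le_trans th_gt0 (l_ge k).
exists (normalized_eigenrows Y O l f); split.
  exact: normalized_eigenrows_orthonormal.
exact: normalized_eigenrows_linf.
Qed.
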